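(* Let $\Bbbk$ be an algebraically closed field of characteristic zero and let $\mathcal{V}$ be the Virasoro algebra over $\Bbbk$. Let $M$ be a simple weight $\mathcal{V}$-module and let $\mu\in\Bbbk$ be such that $\dim M_\mu<\infty$ and $\dim M_{\mu+i}=\infty$ for every $i\in\mathbb{Z}\setminus\{0\}$. Then $\mu\in\{-1,0,1\}$.
   Context: The Virasoro algebra $\mathcal{V}$ over $\Bbbk$ has basis consisting of a central element $c$ and elements $e_i$, $i\in\mathbb{Z}$, with bracket $[e_i,e_j]=(j-i)e_{i+j}+\delta_{i,-j}\frac{i^3-i}{12}c$. A weight $\mathcal{V}$-module is a module on which $e_0$ and $c$ act diagonalizably; $M_\lambda=\{m\in M: e_0m=\lambda m\}$. *)

From HB Require Import structures.
From mathcomp Require Import all_boot all_order all_algebra.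
Set Implicit Arguments. Unset Strict Implicit. Unset Printing Implicit Defensive.
Import Order.TTheory GRing.Theory Num.Theory.
Local Open Scope ring_scope.

(* A module over the Virasoro algebra (basis c, e_i (i in Z)) on a k-vector space V
   is given by the actions E i of e_i and C of c, which are k-linear maps satisfying
   [e_i, e_j] = (j - i) e_{i+j} + delta_{i,-j} (i^3 - i)/12 c  and  [c, e_i] = 0. *)
Definition vir_module (k : fieldType) (V : lmodType k)
  (E : int -> V -> V) (C : V -> V) : Prop :=
  [/\ (forall i, linear (E i)), linear C,
      (forall (i j : int) (v : V),
         E i (E j v) - E j (E i v) =
           (j - i)%:~R *: E (i + j) v
           + (if i + j == 0 then (i%:~R ^+ 3 - i%:~R) / 12%:R else 0) *: C v)
    & (forall (i : int) (v : V), C (E i v) = E i (C v))].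

Definition vir_submodule (k : fieldType) (V : lmodType k)
  (E : int -> V -> V) (C : V -> V) (S : pred V) : Prop :=
  [/\ S 0, (forall (a : k) u v, S u -> S v -> S (a *: u + v)),
      (forall i v, S v -> S (E i v)) & (forall v, S v -> S (C v))].

Definition vir_simple (k : fieldType) (V : lmodType k)
  (E : int -> V -> V) (C : V -> V) : Prop :=
  (exists v : V, v != 0) /\
  forall S : pred V, vir_submodule E C S ->
    (forall v, S v -> v = 0) \/ (forall v, S v).

Definition diagonalizable (k : fieldType) (V : lmodType k) (f : V -> V) : Prop :=
  forall v : V, exists s : seq (k * V),
    (forall p, p \in s -> f p.2 = p.1 *: p.2) /\ v = \sum_(p <- s) p.2.

Definition vir_weight (k : fieldType) (V : lmodType k)
  (E : int -> V -> V) (C : V -> V) : Prop :=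
  diagonalizable (E 0) /\ diagonalizable C.

Definition weight_space (k : fieldType) (V : lmodType k)
  (E : int -> V -> V) (lam : k) : pred V :=
  fun v => E 0 v == lam *: v.

Definition fin_dim (k : fieldType) (V : lmodType k) (S : pred V) : Prop :=
  exists s : seq V, forall v, S v ->
    exists a : 'I_(size s) -> k, v = \sum_(i < size s) a i *: s`_i.

(* Put [lam = mu + 1].  The maps [e_(-1)] and [e_(-2) e_1] send the
   infinite-dimensional [M_lam] into the finite-dimensional [M_mu], so their
   common kernel in [M_lam] contains some [y <> 0].  Evaluating [e_(-5) e_1^3 y]
   in two ways gives [lam (lam - 1) (lam - 2) e_(-2) y = 0].  If [mu] is not in
   [{-1, 0, 1}], then [e_(-2) y = 0], hence [e_(-n) y = 0] for all [n > 0], and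
   the submodule generated by [y], which is [M] by simplicity, is spanned by
   vectors of weights in [lam + N]; this contradicts [M_(mu - 1) <> 0]. *)

From HB Require Import structures.
From mathcomp Require Import all_boot all_order all_algebra.
From mathcomp Require Import ring zify.
From Stdlib Require Import Classical ClassicalEpsilon.
Set Implicit Arguments. Unset Strict Implicit. Unset Printing Implicit Defensive.
Import Order.TTheory GRing.Theory Num.Theory.
Local Open Scope ring_scope.

Section Spans.
Variables (k : fieldType) (V : lmodType k).

Definition in_span (s : seq V) (v : V) : Prop :=
  exists a : 'I_(size s) -> k, v = \sum_(i < size s) a i *: s`_i.

(* For [S : pred V], [fin_dim S] is convertible to [fin_spanned S]. *)
Definition fin_spanned (P : V -> Prop) : Prop :=
  exists s, forall v, P v -> in_span s v.

Definition subspace (P : V -> Prop) : Prop :=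
  P 0 /\ forall a u v, P u -> P v -> P (a *: u + v).

Lemma in_span0 s : in_span s 0.
Proof. by exists (fun=> 0); rewrite big1 // => i _; rewrite scale0r. Qed.

Lemma in_spanZD s c u v : in_span s u -> in_span s v -> in_span s (c *: u + v).
Proof.
move=> [a ->] [b ->]; exists (fun i => c * a i + b i).
by rewrite scaler_sumr -big_split; apply: eq_bigr => i _; rewrite scalerDl scalerA.
Qed.

Lemma in_span_cons x s v : in_span (x :: s) v <-> exists b, in_span s (v - b *: x).
Proof.
split=> [[a ->]|[b [a hv]]].
  exists (a ord0), (fun i => a (lift ord0 i)).
  by rewrite big_ord_recl addrC addKr.
exists (fun i => if unlift ord0 i is Some j then a j else b).
rewrite big_ord_recl unlift_none /=.
under eq_bigr do rewrite liftK.
by rewrite -hv addrC subrK.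
Qed.

Lemma not_fin_spanned_nonzero P : ~ fin_spanned P -> exists2 v, P v & v != 0.
Proof.
move=> P_inf; apply: NNPP => no_nz; apply: P_inf; exists [::] => v Pv.
suff -> : v = 0 by apply: in_span0.
by apply: NNPP => /eqP v_nz; apply: no_nz; exists v.
Qed.

Inductive lin_span (P : V -> Prop) : V -> Prop :=
| lin_span0 : lin_span P 0
| lin_spanZD a m v : P m -> lin_span P v -> lin_span P (a *: m + v).

Lemma lin_span_sub (P : V -> Prop) m : P m -> lin_span P m.
Proof.
by move=> Pm; rewrite -[m]addr0 -[m]scale1r; apply: lin_spanZD; last apply: lin_span0.
Qed.

Lemma lin_spanD (P : V -> Prop) u v : lin_span P u -> lin_span P v -> lin_span P (u + v).
Proof.
move=> + Pv; elim=> [|a m u' Pm _ IH]; first by rewrite add0r.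
by rewrite -addrA; apply: lin_spanZD.
Qed.

Lemma lin_spanZ (P : V -> Prop) b u : lin_span P u -> lin_span P (b *: u).
Proof.
elim=> [|a m u' Pm _ IH]; first by rewrite scaler0; apply: lin_span0.
by rewrite scalerDr scalerA; apply: lin_spanZD.
Qed.

Section LinearImage.
Variables (f : V -> V) (f_linear : linear f).
HB.instance Definition _ := GRing.isLinear.Build k V V *:%R f f_linear.

Lemma lin_span_map (P : V -> Prop) u :
  (forall m, P m -> lin_span P (f m)) -> lin_span P u -> lin_span P (f u).
Proof.
move=> fP; elim=> [|a m u' Pm _ IH]; first by rewrite linear0; apply: lin_span0.
by rewrite linearP; apply: lin_spanD => //; apply: lin_spanZ; apply: fP.
Qed.

End LinearImage.
End Spans.

Section Kernel.
Variables (k : fieldType) (V U : lmodType k) (f : V -> U).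
Hypothesis f_linear : linear f.
HB.instance Definition _ := GRing.isLinear.Build k V U *:%R f f_linear.

Lemma subspace_kernel W : subspace W -> subspace (fun v => W v /\ f v = 0).
Proof.
case=> W0 WZD; split=> [|a u v [Wu fu] [Wv fv]]; first by rewrite linear0.
split; first exact: WZD.
by rewrite f_linear fu fv scaler0 addr0.
Qed.

Lemma fin_spanned_of_kernel (s : seq U) W : subspace W ->
  (forall v, W v -> in_span s (f v)) ->
  fin_spanned (fun v => W v /\ f v = 0) -> fin_spanned W.
Proof.
elim: s W => [|x s IH] W [W0 WZD] fW_s [t ker_t].
  exists t => v Wv; apply: ker_t; split => //.
  by have [a ->] := fW_s v Wv; rewrite big_ord0.
have [fW_s'|] := classic (forall v, W v -> in_span s (f v)).
  by apply: IH => //; exists t.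
move=> /not_all_ex_not[w0 /(imply_to_and (W w0))[Ww0 fw0_s']].
have [b0 hb0] := (in_span_cons _ _ _).1 (fW_s w0 Ww0).
have b0_nz : b0 != 0.
  by apply: contra_notN fw0_s' => /eqP b0_0; move: hb0; rewrite b0_0 scale0r subr0.
pose W' v := W v /\ in_span s (f v).
have [t' W'_t'] : fin_spanned W'.
  apply: IH => [|v []//|].
  - split=> [|a u v [Wu su] [Wv sv]].
      by rewrite /W' linear0; split => //; apply: in_span0.
    by rewrite /W' f_linear; split; [apply: WZD | apply: in_spanZD].
  - by exists t => v [[Wv _] fv0]; apply: ker_t.
exists (w0 :: t') => v Wv; have [b hb] := (in_span_cons _ _ _).1 (fW_s v Wv).
apply/in_span_cons; exists (b / b0); apply: W'_t'; split.
  by rewrite -scaleNr addrC; apply: WZD.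
have -> : f (v - (b / b0) *: w0) = - (b / b0) *: (f w0 - b0 *: x) + (f v - b *: x).
  rewrite linearB linearZZ scaleNr scalerBr scalerA divfK // opprB.
  by rewrite [RHS]addrC addrA subrK.
exact: in_spanZD.
Qed.

End Kernel.

Section ShiftedProduct.
Variables (k : fieldType) (V : lmodType k) (f : V -> V) (lam : k).
Hypothesis f_linear : linear f.
HB.instance Definition _ := GRing.isLinear.Build k V V *:%R f f_linear.
Let f0 : f 0 = 0. Proof. exact: linear0. Qed.
Let fZ a v : f (a *: v) = a *: f v. Proof. exact: linearZZ. Qed.

Fixpoint shifted_prod (N : nat) (v : V) : V :=
  if N is N'.+1 then
    f (shifted_prod N' v) - (lam + N'%:R) *: shifted_prod N' v
  else v.

Lemma shifted_prod_linear N : linear (shifted_prod N).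
Proof.
elim: N => [//|N IH] a u v /=.
rewrite IH f_linear scalerDr scalerBr scalerA (mulrC _ a) -scalerA opprD.
by rewrite addrACA.
Qed.

Lemma shifted_prod_eigen nu v : f v = nu *: v ->
  forall N, shifted_prod N v = (\prod_(i < N) (nu - (lam + i%:R))) *: v.
Proof.
move=> v_nu; elim=> [|N IH] /=; first by rewrite big_ord0 scale1r.
rewrite IH big_ord_recr /= fZ v_nu !scalerA -scalerBl.
by congr (_ *: _); rewrite mulrBr (mulrC (lam + _)).
Qed.

Lemma shifted_prod_stable N M v : (N <= M)%N ->
  shifted_prod N v = 0 -> shifted_prod M v = 0.
Proof.
move=> /subnK <- vN; elim: (M - N)%N => [//|d IH] /=.
by rewrite IH f0 scaler0 subr0.
Qed.

End ShiftedProduct.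

Section Virasoro.
Variables (k : fieldType) (V : lmodType k) (E : int -> V -> V) (C : V -> V).
Hypotheses (hmod : vir_module E C) (char0 : [pchar k] =i pred0).

Let E_linear i : linear (E i). Proof. by case: hmod. Qed.
Let C_linear : linear C. Proof. by case: hmod. Qed.
HB.instance Definition _ i := GRing.isLinear.Build k V V *:%R (E i) (E_linear i).
HB.instance Definition _ := GRing.isLinear.Build k V V *:%R C C_linear.
Let EZ i a v : E i (a *: v) = a *: E i v. Proof. exact: linearZZ. Qed.
Let E_0 i : E i 0 = 0. Proof. exact: linear0. Qed.
Let CZ a v : C (a *: v) = a *: C v. Proof. exact: linearZZ. Qed.

Lemma vir_comm i j v : i + j != 0 ->
  E i (E j v) = E j (E i v) + (j - i)%:~R *: E (i + j) v.
Proof.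
case: hmod => _ _ bracket _ ij_nz; move/eqP: (bracket i j v).
by rewrite (negbTE ij_nz) scale0r addr0 subr_eq addrC => /eqP.
Qed.

Lemma vir_comm_m1_1 v : E (-1) (E 1 v) = E 1 (E (-1) v) + 2%:R *: E 0 v.
Proof.
case: hmod => _ _ bracket _; move/eqP: (bracket (-1) 1 v).
have -> : ((-1 : int)%:~R ^+ 3 - (-1 : int)%:~R) / 12%:R = 0 :> k by ring.
by rewrite scale0r addr0 subr_eq addrC => /eqP.
Qed.

Lemma vir_comm_m2_1 v : E (-2) (E 1 v) = E 1 (E (-2) v) + 3%:R *: E (-1) v.
Proof. by rewrite [LHS]vir_comm. Qed.

Lemma Em3_comm v : E (-3) v = E (-2) (E (-1) v) - E (-1) (E (-2) v).
Proof. by rewrite [E (-2) (E (-1) v)]vir_comm //= scale1r addrC addKr. Qed.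

Lemma Em4_comm v : 2%:R *: E (-4) v = E (-3) (E (-1) v) - E (-1) (E (-3) v).
Proof. by rewrite [E (-3) (E (-1) v)]vir_comm // addrC addKr. Qed.

Lemma Em5_comm23 v : E (-5) v = E (-3) (E (-2) v) - E (-2) (E (-3) v).
Proof.
rewrite [E (-2) (E (-3) v)]vir_comm // (opprD (E (-3) _)) addNKr -scaleNr.
by rewrite -[LHS]scale1r; congr (_ *: _); ring.
Qed.

Lemma Em5_comm14 v : 3%:R *: E (-5) v = E (-4) (E (-1) v) - E (-1) (E (-4) v).
Proof.
rewrite [E (-1) (E (-4) v)]vir_comm // (opprD (E (-4) _)) addNKr -scaleNr.
by congr (_ *: _); ring.
Qed.

Lemma weight_shift i a v : E 0 v = a *: v -> E 0 (E i v) = (a + i%:~R) *: E i v.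
Proof.
case: hmod => _ _ bracket _ v_a; move/eqP: (bracket 0 i v).
have -> : ((0 : int)%:~R ^+ 3 - (0 : int)%:~R) / 12%:R = 0 :> k by ring.
rewrite if_same scale0r addr0 add0r subr0 v_a EZ subr_eq => /eqP ->.
by rewrite scalerDl addrC.
Qed.

Lemma weight_space_shift i lam v :
  weight_space E lam v -> weight_space E (lam + i%:~R) (E i v).
Proof. by move=> /eqP v_lam; apply/eqP; apply: weight_shift. Qed.

Lemma weight_space_subspace lam : subspace (fun v => weight_space E lam v).
Proof.
split=> [|a u v /eqP u_lam /eqP v_lam]; apply/eqP; first by rewrite E_0 scaler0.
by rewrite E_linear u_lam v_lam scalerDr !scalerA mulrC.
Qed.

Section Raising.
Variables (lam : k) (y : V).
Hypotheses (y_lam : E 0 y = lam *: y) (Em1_y : E (-1) y = 0).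
Local Notation z n := (iter n (E 1) y).

Lemma weight_raise n : E 0 (z n) = (lam + n%:R) *: z n.
Proof.
elim: n => [|n IH]; first by rewrite addr0.
by rewrite /= (weight_shift 1 IH); congr (_ *: _); ring.
Qed.

Lemma Em1_raise n : E (-1) (z n.+1) = (n.+1%:R * (2%:R * lam + n%:R)) *: z n.
Proof.
elim: n => [|n IH].
  by rewrite /= vir_comm_m1_1 Em1_y E_0 add0r y_lam scalerA; congr (_ *: _); ring.
rewrite [z n.+2]/= vir_comm_m1_1 IH EZ (weight_raise n.+1) scalerA -scalerDl.
by congr (_ *: _); ring.
Qed.

Hypothesis Em2_E1y : E (-2) (E 1 y) = 0.

Lemma Em2_raise n :
  E (-2) (z n.+2) = (n.+1%:R * n.+2%:R * (3%:R * lam + n%:R)) *: z n.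
Proof.
elim: n => [|n IH].
  rewrite [z 2]/= vir_comm_m2_1 Em2_E1y E_0 add0r (Em1_raise 0) scalerA.
  by congr (_ *: _); ring.
rewrite [z n.+3]/= vir_comm_m2_1 IH EZ (Em1_raise n.+1) scalerA -scalerDl.
by congr (_ *: _); ring.
Qed.

(* Compute [e_(-5) e_1^3 y] once through [e_(-5) = - [e_(-2), e_(-3)]] and once
   through [3 e_(-5) = - [e_(-1), e_(-4)]]. *)
Lemma lowest_weight_relation : (lam * (lam - 1) * (lam - 2%:R)) *: E (-2) y = 0.
Proof.
have natf_eq0 := (pcharf0P _).1 char0.
set w := E (-2) y.
have Em1_1 := Em1_raise 0; have Em1_2 := Em1_raise 1; have Em1_3 := Em1_raise 2.
have Em2_2 := Em2_raise 0; have Em2_3 := Em2_raise 1.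
have Em3_1 : E (-3) (z 1) = (2%:R * lam) *: w.
  rewrite Em3_comm Em1_1 Em2_E1y E_0 subr0 EZ; congr (_ *: _); ring.
have Em3_2 : E (-3) (z 2) = 0.
  by rewrite Em3_comm Em1_2 Em2_2 !EZ Em2_E1y Em1_y !scaler0 subr0.
have Em3_3 : E (-3) (z 3) = (24%:R * lam) *: y.
  rewrite Em3_comm Em1_3 Em2_3 !EZ Em2_2 Em1_1 !scalerA -scalerBl.
  by congr (_ *: _); ring.
have Em4_2 : 2%:R *: E (-4) (z 2) = ((4%:R * lam + 2%:R) * (2%:R * lam)) *: w.
  rewrite Em4_comm Em1_2 Em3_2 E_0 subr0 EZ Em3_1 scalerA.
  by congr (_ *: _); ring.
have Em4_3 : E (-4) (z 3) = 0.
  move: (Em4_comm (z 3)); rewrite Em1_3 Em3_3 !EZ Em3_2 Em1_y !scaler0 subrr.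
  by move/eqP; rewrite scaler_eq0 natf_eq0 => /eqP.
have Em5_3 : 6%:R *: E (-5) (z 3) = (6%:R * (36%:R * lam ^+ 2 - 12%:R * lam)) *: w.
  rewrite Em5_comm23 Em2_3 Em3_3 !EZ Em3_1 !scalerA -scalerBl scalerA.
  by congr (_ *: _); ring.
have Em5_3' : 6%:R *: E (-5) (z 3)
    = ((6%:R * lam + 6%:R) * ((4%:R * lam + 2%:R) * (2%:R * lam))) *: w.
  have -> : 6%:R *: E (-5) (z 3) = 2%:R *: (3%:R *: E (-5) (z 3)).
    by rewrite scalerA; congr (_ *: _); ring.
  rewrite Em5_comm14 Em4_3 E_0 subr0 Em1_3 EZ scalerA (mulrC 2%:R) -[LHS]scalerA Em4_2 scalerA.
  by congr (_ *: _); ring.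
suff : 48%:R *: ((lam * (lam - 1) * (lam - 2%:R)) *: w) = 0.
  by move/eqP; rewrite scaler_eq0 natf_eq0 => /eqP.
rewrite scalerA.
have -> : 48%:R * (lam * (lam - 1) * (lam - 2%:R))
    = (6%:R * lam + 6%:R) * ((4%:R * lam + 2%:R) * (2%:R * lam))
      - 6%:R * (36%:R * lam ^+ 2 - 12%:R * lam) by ring.
by rewrite scalerBl -Em5_3 -Em5_3' subrr.
Qed.

End Raising.

Lemma lowering_vanish y : E (-1) y = 0 -> E (-2) y = 0 ->
  forall n, E (- n.+1%:Z) y = 0.
Proof.
move=> Em1_y Em2_y; elim=> [|[|n] IH] //.
have natf_eq0 := (pcharf0P _).1 char0.
have := vir_comm (i := - n.+2%:Z) (j := -1) y isT.
rewrite Em1_y IH !E_0 add0r => /esym/eqP.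
have -> : -1 - - n.+2%:Z = n.+1 by lia.
have -> : - n.+2%:Z + -1 = - n.+3%:Z by lia.
by rewrite scaler_eq0 /= natf_eq0 => /eqP.
Qed.

Lemma exists_lowering_kernel_vector lam (s : seq V) :
  ~ fin_spanned (fun v => weight_space E lam v) ->
  (forall v, weight_space E (lam - 1) v -> in_span s v) ->
  exists2 y, y != 0 & [/\ E 0 y = lam *: y, E (-1) y = 0 & E (-2) (E 1 y) = 0].
Proof.
move=> lam_inf lam1_s.
pose K1 v := weight_space E lam v /\ E (-1) v = 0.
have K1_sub : subspace K1 := subspace_kernel (E_linear (-1)) (weight_space_subspace lam).
have K1_inf : ~ fin_spanned K1.
  apply: contra_not lam_inf; apply: (fin_spanned_of_kernel (E_linear (-1)) (s := s)).
    exact: weight_space_subspace.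
  by move=> v /(weight_space_shift (-1)); apply: lam1_s.
have E21_linear : linear (fun v => E (-2) (E 1 v)) by move=> a u v; rewrite !E_linear.
have K2_inf : ~ fin_spanned (fun v => K1 v /\ E (-2) (E 1 v) = 0).
  apply: contra_not K1_inf; apply: (fin_spanned_of_kernel E21_linear (s := s) K1_sub).
  move=> v [/(weight_space_shift 1)/(weight_space_shift (-2)) v_lam _]; apply: lam1_s.
  by move: v_lam; congr (weight_space _ _ _); ring.
have [y [[/eqP y_lam Em1_y] Em21_y] y_nz] := not_fin_spanned_nonzero K2_inf.
by exists y.
Qed.

Inductive raising_orbit (y : V) : V -> Prop :=
| orbit_base : raising_orbit y y
| orbit_E p m : raising_orbit y m -> raising_orbit y (E p.+1%:Z m)
| orbit_C m : raising_orbit y m -> raising_orbit y (C m).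

Section LowestWeightVector.
Variables (lam : k) (y : V).
Hypotheses (y_lam : E 0 y = lam *: y) (Em1_y : E (-1) y = 0) (Em2_y : E (-2) y = 0).

Lemma raising_orbit_weight m : raising_orbit y m ->
  exists d : nat, E 0 m = (lam + d%:R) *: m.
Proof.
elim=> [|p {}m _ [d m_d]|{}m _ [d m_d]]; first by exists 0%N; rewrite addr0.
  by exists (d + p.+1)%N; rewrite (weight_shift _ m_d) natrD addrA.
by exists d; case: hmod => _ _ _ CE; rewrite -CE m_d CZ.
Qed.

Lemma raising_span_stable m : raising_orbit y m ->
  forall j, lin_span (raising_orbit y) (E j m).
Proof.
elim=> [|p {}m m_orb IH|{}m _ IH] j.
- case: j => [[|p]|n].
  + by rewrite y_lam; apply/lin_spanZ/lin_span_sub/orbit_base.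
  + exact/lin_span_sub/orbit_E/orbit_base.
  + by rewrite NegzE (lowering_vanish Em1_y Em2_y); apply: lin_span0.
- case: hmod => _ _ bracket _; move/eqP: (bracket j p.+1%:Z m).
  rewrite subr_eq => /eqP ->.
  apply: lin_spanD; first by apply: lin_spanD; apply: lin_spanZ;
    [apply: IH | apply/lin_span_sub/orbit_C].
  apply: (lin_span_map (E_linear p.+1%:Z)) (IH j) => m' m'_orb.
  exact/lin_span_sub/orbit_E.
- case: hmod => _ _ _ <-.
  by apply: (lin_span_map C_linear) (IH j) => m' m'_orb; apply/lin_span_sub/orbit_C.
Qed.

Lemma raising_span_submodule :
  vir_submodule E C (fun v => excluded_middle_informative (lin_span (raising_orbit y) v)).
Proof.
split=> [|a u v /sumboolP u_S /sumboolP v_S|i v /sumboolP v_S|v /sumboolP v_S]; apply/sumboolP.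
- exact: lin_span0.
- exact/lin_spanD/v_S/lin_spanZ.
- by apply: (lin_span_map (E_linear i)) v_S => m /raising_span_stable.
- by apply: (lin_span_map C_linear) v_S => m m_orb; apply/lin_span_sub/orbit_C.
Qed.

Lemma raising_span_annihilated v : lin_span (raising_orbit y) v ->
  exists N, shifted_prod (E 0) lam N v = 0.
Proof.
have P0_linear := shifted_prod_linear lam (E_linear 0).
elim=> [|a m u m_orb _ [N u_N]]; first by exists 0%N.
have [d m_d] := raising_orbit_weight m_orb.
exists (maxn N d.+1); rewrite P0_linear (shifted_prod_stable (E_linear 0) _ u_N).
  rewrite (shifted_prod_eigen _ (E_linear 0) m_d) addr0.
  suff /eqP-> : \prod_(i < maxn N d.+1) (lam + d%:R - (lam + i%:R)) == 0.
    by rewrite scale0r scaler0.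
  have d_lt : (d < maxn N d.+1)%N by rewrite leq_max leqnn orbT.
  by apply/prodf_eq0; exists (Ordinal d_lt) => //=; rewrite subrr.
by rewrite leq_maxl.
Qed.

Lemma simple_weights_above : vir_simple E C -> y != 0 ->
  forall nu v, v != 0 -> E 0 v = nu *: v -> exists d : nat, nu = lam + d%:R.
Proof.
move=> [_ simple] y_nz nu v v_nz v_nu.
have span_all : lin_span (raising_orbit y) v.
  have [S0|/(_ v)/sumboolP //] := simple _ raising_span_submodule.
  by case/eqP: y_nz; apply/S0/sumboolP/lin_span_sub/orbit_base.
have [N] := raising_span_annihilated span_all.
rewrite (shifted_prod_eigen _ (E_linear 0) v_nu) => /eqP.
rewrite scaler_eq0 (negbTE v_nz) orbF => /prodf_eq0[i _].
by rewrite subr_eq0 => /eqP ->; exists i.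
Qed.

End LowestWeightVector.
End Virasoro.

Theorem lemma3 (k : closedFieldType) (hchar : [pchar k] =i pred0)
  (V : lmodType k) (E : int -> V -> V) (C : V -> V)
  (hmod : vir_module E C) (hsimple : vir_simple E C) (hweight : vir_weight E C)
  (mu : k)
  (hfin : fin_dim (weight_space E mu))
  (hinf : forall i : int, i != 0 -> ~ fin_dim (weight_space E (mu + i%:~R))) :
  mu = -1 \/ mu = 0 \/ mu = 1.
Proof.
have [s mu_s] := hfin.
have [y y_nz [y_lam Em1_y Em21_y]] :
    exists2 y, y != 0 & [/\ E 0 y = (mu + 1) *: y, E (-1) y = 0 & E (-2) (E 1 y) = 0].
  apply: (exists_lowering_kernel_vector hmod (hinf 1 isT)) => v.
  by rewrite addrK; apply: mu_s.
move/eqP: (lowest_weight_relation hmod hchar y_lam Em1_y Em21_y).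
rewrite scaler_eq0 !mulf_eq0 -!orbA => /or4P[/eqP mu1|/eqP mu0|/eqP mu2|/eqP Em2_y].
- by left; apply/eqP; rewrite -subr_eq0 opprK mu1.
- by right; left; rewrite -mu0 addrK.
- by right; right; apply/eqP; rewrite -subr_eq0 -mu2; apply/eqP; ring.
have [v v_mu v_nz] := not_fin_spanned_nonzero (hinf (-1) isT).
have [d] := simple_weights_above hmod hchar y_lam Em1_y Em2_y hsimple y_nz
  v_nz (eqP v_mu).
move/eqP; rewrite -subr_eq0.
have -> : mu + (-1)%:~R - (mu + 1 + d%:R) = - d.+2%:R by ring.
by rewrite oppr_eq0 ((pcharf0P _).1 hchar).
Qed.
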